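(* Let $v=v(z)=zM(z)$, where $M(z)=\frac{1-z-\sqrt{1-2z-3z^2}}{2z^2}$ is the Motzkin generating function (so $z=\frac{v}{1+v+v^2}$). For every integer $h\ge0$, the generating function, by number of nodes, of Retakh plane trees of height at most $2h$ (for $h=0$: of height at most $1$) is $$\frac{z}{1-z}\cdot\frac{1}{1-\dfrac{F_h}{1-z}}=v\,\frac{1-v^{2h+2}}{1-v^{2h+4}}$$ for $h\ge1$, where $F_h=\frac{v^2}{1+v+v^2}\frac{1-v^{2h}}{1-v^{2h+2}}$, and equals $\frac{z}{1-z}=\frac{v}{1+v^2}$ for $h=0$.
   Context: A Retakh plane tree is a plane (ordered rooted) tree in which every non-root leaf has depth $1$ or even depth (root depth $0$); the one-node tree is included. These correspond bijectively (a tree with $n+1$ nodes to a path of semilength $n$) to Dyck paths all of whose peaks are at level $1$ or at an even level. The height of a tree is the maximal depth of a node, i.e. the number of edges of a longest root-to-node path; it equals the maximal height of the corresponding Dyck path. *)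

From HB Require Import structures.
From mathcomp Require Import all_boot all_order all_algebra.
From mathcomp Require Import all_classical all_reals all_analysis.

Set Implicit Arguments.
Unset Strict Implicit.
Unset Printing Implicit Defensive.

Inductive ptree : Type := PNode of seq ptree.

Fixpoint nnodes (t : ptree) : nat :=
  let: PNode ts := t in (sumn (map nnodes ts)).+1.

(* height = maximal depth of a node (number of edges of a longest
   root-to-node path); the one-node tree has height 0. *)
Fixpoint height (t : ptree) : nat :=
  let: PNode ts := t in
  if ts is [::] then 0 else (foldr maxn 0 (map height ts)).+1.

(* retakh_at d t : every leaf of t, viewed as a subtree whose root is at
   depth d, has depth 1 or even depth.  (The root, at depth 0, is even,
   so the one-node tree is included.) *)
Fixpoint retakh_at (d : nat) (t : ptree) : bool :=
  let: PNode ts := t in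
  if ts is [::] then (d == 1) || ~~ odd d
  else all (retakh_at d.+1) ts.

Definition retakh (t : ptree) : bool := retakh_at 0 t.

Fixpoint ptree_enc (t : ptree) : GenTree.tree unit :=
  let: PNode ts := t in GenTree.Node 0 (map ptree_enc ts).

Fixpoint ptree_dec (g : GenTree.tree unit) : ptree :=
  match g with
  | GenTree.Leaf _ => PNode [::]
  | GenTree.Node _ gs => PNode (map ptree_dec gs)
  end.

Fixpoint ptree_encK (t : ptree) : ptree_dec (ptree_enc t) = t :=
  match t return ptree_dec (ptree_enc t) = t with
  | PNode ts => f_equal PNode
      ((fix aux (ts : seq ptree) : map ptree_dec (map ptree_enc ts) = ts :=
          match ts return map ptree_dec (map ptree_enc ts) = ts with
          | [::] => erefl
          | t :: ts' => f_equal2 cons (ptree_encK t) (aux ts')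
          end) ts)
  end.

HB.instance Definition _ := Countable.copy ptree (can_type ptree_encK).

(* Weight a tree by z^(number of nodes) and a sequence of trees by the product
   of the weights of its entries; sums are extended-real sums of nonnegative
   terms.  If a set of trees has total weight s < 1, the sequences of its
   elements have total weight 1/(1-s) and the nonempty ones s/(1-s)
   (geometric series).  A tree is a root above a sequence of subtrees, so the
   Retakh trees of height <= k+1 whose root sits at depth d are the roots above
   sequences of such trees of height <= k rooted at depth d+1, the empty
   sequence being allowed iff a leaf may sit at depth d (d = 1 or d even).
   From depth 2 on this only depends on the parity of the depth, which gives
   a two-component recursion deep_gf.  Writing z = v/(1+v+v^2) with 0 < v < 1,
   its values stay below the fixed point of the recursion (so every geometric
   series converges), and at even depth and height <= 2j it has a closed form
   in v and w = v^(2j).  The theorem follows by peeling the two top levels,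
   once v = z M(z) is shown to satisfy z (1 + v + v^2) = v. *)
From HB Require Import structures.
From mathcomp Require Import all_boot all_order all_algebra.
From mathcomp Require Import all_classical all_reals all_analysis.
From mathcomp Require Import ring lra.
Import Order.TTheory GRing.Theory Num.Theory.
Local Open Scope classical_set_scope.
Local Open Scope ring_scope.

Lemma esumZl (R : realType) (T : choiceType) (I : set T) (a : T -> \bar R) (r : R) :
  0 <= r -> (forall i, (0 <= a i)%E) ->
  (\esum_(i in I) (r%:E * a i) = r%:E * \esum_(i in I) a i)%E.
Proof.
move=> r0 a0; rewrite /esum -ereal_supZl //; last first.
  by apply/set0P; exists 0%E, set0; [exact: fsets_set0 | rewrite fsbig_set0].
congr ereal_sup; apply/seteqP; split => x /=.
- by move=> [A hA <-]; exists (\sum_(i \in A) a i)%E; [exists A | rewrite ge0_mule_fsumr].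
- by move=> [y [A hA <-] <-]; exists A => //; rewrite ge0_mule_fsumr.
Qed.

Lemma nneseries_geometric (R : realType) (s : R) : 0 <= s -> s < 1 ->
  (\sum_(k <oo) (s ^+ k)%:E = ((1 - s)^-1)%:E)%E.
Proof.
move=> s0 s1; apply: cvg_lim => //.
under eq_fun do rewrite sumEFin.
apply: cvg_EFin; first exact: nearW.
have := @cvg_geometric_series R 1 s; rewrite ger0_norm // mul1r => /(_ s1).
by rewrite -exprn_geometric.
Qed.

Section SequenceSums.
Variables (R : realType) (T : choiceType) (w : T -> R).
Hypothesis w_ge0 : forall x, 0 <= w x.

Definition seq_weight (s : seq T) : R := \prod_(x <- s) w x.

Definition seqs_in (A : set T) : set (seq T) :=
  [set s : seq T | forall x : T, x \in s -> A x].
Definition seqs_of_size (A : set T) (k : nat) : set (seq T) :=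
  [set s : seq T | size s = k /\ seqs_in A s].

Lemma seq_weight_ge0 (s : seq T) : 0 <= seq_weight s.
Proof. exact: prodr_ge0. Qed.

Lemma esum_cons {A : set T} {B : set (seq T)} {a b : R} : 0 <= b ->
  \esum_(x in A) (w x)%:E = a%:E -> \esum_(s in B) (seq_weight s)%:E = b%:E ->
  \esum_(s in (fun p => p.1 :: p.2) @` (A `*` B)) (seq_weight s)%:E = (a * b)%:E.
Proof.
move=> b0 hA hB; rewrite esum_image; last by move=> [? ?] [? ?] _ _ /= [-> ->].
have split_weight (p : T * seq T) :
    (seq_weight (p.1 :: p.2))%:E = ((w p.1)%:E * (seq_weight p.2)%:E)%E.
  by rewrite /seq_weight big_cons EFinM.
rewrite (eq_esum (fun p _ => split_weight p)) -(esum_esum (J := fun=> B)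
  (a := fun x s => (w x)%:E * (seq_weight s)%:E)%E); last first.
  by move=> x s _ _; rewrite mule_ge0 // lee_fin ?seq_weight_ge0.
have wB x : A x -> (\esum_(s in B) ((w x)%:E * (seq_weight s)%:E) = b%:E * (w x)%:E)%E.
  by move=> _; rewrite esumZl // => [|s]; rewrite ?hB 1?muleC // lee_fin seq_weight_ge0.
by rewrite (eq_esum wB) esumZl // hA -EFinM mulrC.
Qed.

Lemma seqs_in_cons (A : set T) :
  (fun p => p.1 :: p.2) @` (A `*` seqs_in A) = seqs_in A `\` [set [::]].
Proof.
apply/seteqP; split => s /=.
- move=> [[x s'] [/= Ax hs'] <-]; split => //.
  by move=> y; rewrite in_cons => /orP[/eqP ->|/hs'].
- case: s => [|x s] [hs] //= _; exists (x, s) => //.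
  split => /=; first by apply: hs; rewrite mem_head.
  by move=> y ys; apply: hs; rewrite in_cons ys orbT.
Qed.

Section GivenTotal.
Variables (A : set T) (a : R).
Hypotheses (a_ge0 : 0 <= a) (hA : \esum_(x in A) (w x)%:E = a%:E).

Lemma esum_seqs_of_size (k : nat) :
  \esum_(s in seqs_of_size A k) (seq_weight s)%:E = (a ^+ k)%:E.
Proof.
elim: k => [|k IH].
  have -> : seqs_of_size A 0 = [set [::]].
    by apply/seteqP; split => s /=; [case=> /size0nil | move=> ->].
  by rewrite esum_set1 ?lee_fin ?seq_weight_ge0 // /seq_weight big_nil.
have -> : seqs_of_size A k.+1 = (fun p => p.1 :: p.2) @` (A `*` seqs_of_size A k).
  apply/seteqP; split => s.
  - case=> hk hs; have : (seqs_in A `\` [set [::]]) s by split=> //; case: s hk {hs}.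
    rewrite -seqs_in_cons => -[[x s'] [/= Ax hs'] ss']; exists (x, s') => //.
    by split=> //; split=> //; move: hk; rewrite -ss' => -[].
  - move=> [[x s'] [/= Ax [hk hs']] <-]; split; first by rewrite /= hk.
    by move=> y; rewrite in_cons => /orP[/eqP ->|/hs'].
by rewrite (esum_cons (exprn_ge0 k a_ge0) hA IH) exprS.
Qed.

Lemma esum_seqs_in : a < 1 ->
  \esum_(s in seqs_in A) (seq_weight s)%:E = ((1 - a)^-1)%:E.
Proof.
move=> a1; have -> : seqs_in A = \bigcup_(k in setT) seqs_of_size A k.
  by apply/seteqP; split => s /=; [exists (size s) | move=> [k _ []]].
rewrite esum_bigcupT => [| k l _ _ [s [[<- _] [<- _]]] // | s].
  rewrite (eq_esum (fun k _ => esum_seqs_of_size k)) -nneseries_esumT.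
    exact: nneseries_geometric.
  by move=> k; rewrite lee_fin exprn_ge0.
by rewrite lee_fin seq_weight_ge0.
Qed.

Lemma esum_nonempty_seqs_in : a < 1 ->
  \esum_(s in seqs_in A `\` [set [::]]) (seq_weight s)%:E = (a / (1 - a))%:E.
Proof.
move=> a1; rewrite -seqs_in_cons (esum_cons _ hA (esum_seqs_in a1)) //.
by rewrite invr_ge0 subr_ge0 ltW.
Qed.
End GivenTotal.
End SequenceSums.
Arguments seqs_in {T} A.
Arguments seq_weight {R T} w s.
Arguments seq_weight_ge0 {R T w} w_ge0 s.
Arguments esum_seqs_in {R T w} w_ge0 {A a}.
Arguments esum_nonempty_seqs_in {R T w} w_ge0 {A a}.

Definition leaf_allowed (d : nat) : bool := (d == 1%N) || ~~ odd d.

Definition retakh_trees (d k : nat) : set ptree :=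
  [set t | retakh_at d t && (height t <= k)%N].

Lemma height_PNode_leS (ts : seq ptree) (k : nat) :
  (height (PNode ts) <= k.+1)%N = all (fun t => height t <= k)%N ts.
Proof.
case: ts => [|t ts] //; rewrite -[height _]/(_.+1) ltnS.
by elim: (t :: ts) => [|u us IH] //=; rewrite geq_max IH.
Qed.

Lemma retakh_trees0 (d : nat) :
  retakh_trees d 0 = if leaf_allowed d then [set PNode [::]] else set0.
Proof.
apply/seteqP; split => [[[|u us]]|t] /=; rewrite /retakh_trees /=.
- by rewrite andbT /leaf_allowed => ->.
- by rewrite andbF.
- by case: ifP => // ok ->; rewrite /= andbT.
Qed.

Lemma retakh_treesS (d k : nat) :
  retakh_trees d k.+1 = PNode @` (if leaf_allowed d then seqs_in (retakh_trees d.+1 k)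
                                  else seqs_in (retakh_trees d.+1 k) `\` [set [::]]).
Proof.
have children_ok (ts : seq ptree) : seqs_in (retakh_trees d.+1 k) ts =
    all (retakh_at d.+1) ts && all (fun t => height t <= k)%N ts.
  rewrite -all_predI; apply/propext; split => [h|/allP h t /h //].
  by apply/allP => t /h.
apply/seteqP; split => [[ts]|t].
- rewrite /retakh_trees /= height_PNode_leS; case: ts => [|u us] /= hts.
    by move: hts; rewrite andbT -/(leaf_allowed d) => ->; exists [::].
  exists (u :: us) => //; have : seqs_in (retakh_trees d.+1 k) (u :: us).
    by rewrite children_ok.
  by case: ifP.
- move=> [ts hts <-]; rewrite /retakh_trees /= height_PNode_leS.
  case: ts hts => [|u us] /=; first by case: ifP => [ok _|_ [_ /(_ erefl)]] //; rewrite andbT.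
  by case: ifP => _ => [|[]]; rewrite children_ok.
Qed.

Section TreeSums.
Variables (R : realType) (z : R).
Hypothesis z_ge0 : 0 <= z.

Definition tree_weight (t : ptree) : R := z ^+ nnodes t.

Lemma tree_weight_ge0 (t : ptree) : 0 <= tree_weight t.
Proof. exact: exprn_ge0. Qed.

Lemma tree_weight_node (ts : seq ptree) :
  tree_weight (PNode ts) = z * seq_weight tree_weight ts.
Proof.
rewrite /tree_weight /= exprS; congr (_ * _).
by elim: ts => [|t ts IH]; rewrite /seq_weight ?big_nil ?big_cons //= exprD IH.
Qed.

Lemma esum_retakh_trees0 (d : nat) :
  \esum_(t in retakh_trees d 0) (tree_weight t)%:E = (if leaf_allowed d then z else 0)%:E.
Proof.
rewrite retakh_trees0; case: ifP => _; last by rewrite esum_set0.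
by rewrite esum_set1 ?lee_fin ?tree_weight_ge0 // /tree_weight expr1.
Qed.

Lemma esum_retakh_treesS (d k : nat) (s : R) : 0 <= s -> s < 1 ->
  \esum_(t in retakh_trees d.+1 k) (tree_weight t)%:E = s%:E ->
  \esum_(t in retakh_trees d k.+1) (tree_weight t)%:E =
    (if leaf_allowed d then z / (1 - s) else z * (s / (1 - s)))%:E.
Proof.
move=> s0 s1 hs; rewrite retakh_treesS esum_image; last by move=> ? ? _ _ [].
under eq_esum do rewrite tree_weight_node EFinM.
rewrite esumZl //; last by move=> ts; rewrite lee_fin (seq_weight_ge0 tree_weight_ge0).
case: ifP => _.
- by rewrite (esum_seqs_in tree_weight_ge0 s0 hs s1) -EFinM.
- by rewrite (esum_nonempty_seqs_in tree_weight_ge0 s0 hs s1) -EFinM.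
Qed.
End TreeSums.
Arguments tree_weight {R} z t.
Arguments esum_retakh_trees0 {R z} z_ge0 d.
Arguments esum_retakh_treesS {R z} z_ge0 {d k s}.

(* Below depth 2 the leaf condition only depends on the parity of the depth:
   deep_gf z b k is the generating function of retakh_trees d k for every
   depth d >= 2 of parity b (a leaf is allowed exactly at even depths). *)
Fixpoint deep_gf {R : fieldType} (z : R) (b : bool) (k : nat) : R :=
  if k is k'.+1 then
    let s := deep_gf z (~~ b) k' in if b then z * (s / (1 - s)) else z / (1 - s)
  else if b then 0 else z.

(* The generating functions of Retakh subtrees of unbounded height below an
   odd (resp. even) depth, in terms of v with z = v / (1 + v + v^2); they are
   the fixed point of the recursion defining deep_gf. *)
Definition deep_limit {R : fieldType} (z v : R) (b : bool) : R :=
  if b then z * v else v / (1 + v).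

Lemma deep_limit_lt1 {R : realFieldType} {z v : R} (b : bool) :
  0 < v -> z * (1 + v + v ^+ 2) = v -> deep_limit z v b < 1.
Proof.
move=> v_gt0 hz; case: b => /=; last by rewrite ltr_pdivrMr; lra.
have D0 : 0 < 1 + v + v ^+ 2 by rewrite expr2; nra.
by rewrite -(ltr_pM2r D0) mulrAC hz mul1r expr2; nra.
Qed.

(* The height-bounded generating functions lie below their limits, which
   keeps every geometric series in the construction convergent. *)
Lemma deep_gf_bounds {R : realFieldType} {z v : R} (k : nat) (b : bool) :
  0 < z -> 0 < v -> z * (1 + v + v ^+ 2) = v ->
  0 <= deep_gf z b k <= deep_limit z v b.
Proof.
move=> z_gt0 v_gt0 hz; have v1 : 0 < 1 + v by lra.
elim: k b => [|k IH] b.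
  case: b => /=; first by rewrite lexx mulr_ge0 ?ltW.
  by rewrite (ltW z_gt0) /= ler_pdivlMr //; nra.
have /andP[s0 sle] := IH (~~ b).
have s1 : 0 < 1 - deep_gf z (~~ b) k.
  by rewrite subr_gt0 (le_lt_trans sle) // (deep_limit_lt1 _ v_gt0 hz).
move: s0 sle s1; case: b => /=; set s := deep_gf z _ k => s0 sle s1.
- have q0 : 0 <= s / (1 - s) by rewrite divr_ge0 // ltW.
  rewrite mulr_ge0 ?(ltW z_gt0) //= ler_pM2l // ler_pdivrMr //.
  by move: sle; rewrite ler_pdivlMr //; nra.
- rewrite divr_ge0 ?(ltW z_gt0) ?(ltW s1) //=.
  by rewrite ler_pdivlMr // mulrAC ler_pdivrMr //; nra.
Qed.

Lemma leaf_allowed_deep (d : nat) : (1 < d)%N -> leaf_allowed d = ~~ odd d.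
Proof. by case: d => [|[|d]]. Qed.

Lemma esum_deep_retakh_trees {R : realType} {z v : R} (d k : nat) :
  0 < z -> 0 < v -> z * (1 + v + v ^+ 2) = v -> (1 < d)%N ->
  \esum_(t in retakh_trees d k) (tree_weight z t)%:E = (deep_gf z (odd d) k)%:E.
Proof.
move=> z_gt0 v_gt0 hz; elim: k d => [|k IH] d d_gt1.
  by rewrite (esum_retakh_trees0 (ltW z_gt0)) leaf_allowed_deep //; case: (odd d).
have /andP[s0 sle] := deep_gf_bounds k (~~ odd d) z_gt0 v_gt0 hz.
have s1 := le_lt_trans sle (deep_limit_lt1 _ v_gt0 hz).
have hs := IH d.+1 (ltnW d_gt1); rewrite /= in hs.
rewrite (esum_retakh_treesS (ltW z_gt0) s0 s1 hs) leaf_allowed_deep //=.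
by case: (odd d).
Qed.

Lemma esum_retakh_height1 (R : realType) (z : R) : 0 <= z -> z < 1 ->
  \esum_(t in retakh_trees 0 1) (tree_weight z t)%:E = (z / (1 - z))%:E.
Proof.
move=> z_ge0 z_lt1.
exact: (esum_retakh_treesS z_ge0 z_ge0 z_lt1 (esum_retakh_trees0 z_ge0 1)).
Qed.

Lemma esum_retakh_from_root {R : realType} {z v : R} (k : nat) :
  0 < z -> 0 < v -> v < 1 -> z * (1 + v + v ^+ 2) = v ->
  \esum_(t in retakh_trees 0 k.+2) (tree_weight z t)%:E =
    (z / (1 - z / (1 - deep_gf z false k)))%:E.
Proof.
move=> z_gt0 v_gt0 v_lt1 hz; have z_ge0 := ltW z_gt0.
have /andP[e0 ele] := deep_gf_bounds k false z_gt0 v_gt0 hz.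
have e1 := le_lt_trans ele (deep_limit_lt1 false v_gt0 hz).
set e := deep_gf z false k in e0 ele e1 *.
have depth2 := esum_deep_retakh_trees 2 k z_gt0 v_gt0 hz erefl.
have depth1 := esum_retakh_treesS z_ge0 e0 e1 depth2.
have e_lt1 : 0 < 1 - e by rewrite subr_gt0.
have s0 : 0 <= z / (1 - e) by rewrite divr_ge0 // ltW.
have s1 : z / (1 - e) < 1.
  by rewrite ltr_pdivrMr // mul1r; move: ele; rewrite /= ler_pdivlMr; nra.
exact: (esum_retakh_treesS z_ge0 s0 s1 depth1).
Qed.

(* Closed form, with w = v^(2j), of the generating function of Retakh trees of
   height at most 2j rooted at an even depth >= 2. *)
Definition even_closed {R : fieldType} (v w : R) : R :=
  v * (1 - v ^+ 2 * w) / ((1 + v) * (1 - v ^+ 3 * w)).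

Lemma one_sub_powM_gt0 {R : realFieldType} {v w : R} (k : nat) :
  0 < v -> v < 1 -> 0 <= w <= 1 -> 0 < 1 - v ^+ k.+1 * w.
Proof.
move=> v0 v1 /andP[w0 w1]; have : v ^+ k.+1 < 1 by rewrite exprn_ilt1 // ltW.
have : 0 < v ^+ k.+1 by rewrite exprn_gt0.
nra.
Qed.

(* Two more levels of depth multiply w by v^2 in the closed form. *)
Lemma even_closed_step {R : realFieldType} {z v w : R} :
  z = v / (1 + v + v ^+ 2) -> 0 < v -> v < 1 -> 0 <= w <= 1 ->
  let e := even_closed v w in
  z / (1 - z * (e / (1 - e))) = even_closed v (v ^+ 2 * w).
Proof.
move=> -> v0 v1 w01 e; rewrite /e /even_closed.
have p3 := one_sub_powM_gt0 2 v0 v1 w01; have p4 := one_sub_powM_gt0 3 v0 v1 w01.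
have p5 := one_sub_powM_gt0 4 v0 v1 w01.
by field; repeat (apply/andP; split); rewrite gt_eqF //; nra.
Qed.

Lemma root_closed {R : realFieldType} {z v w : R} :
  z = v / (1 + v + v ^+ 2) -> 0 < v -> v < 1 -> 0 <= w <= 1 ->
  z / (1 - z / (1 - even_closed v w)) = v * (1 - v ^+ 4 * w) / (1 - v ^+ 6 * w).
Proof.
move=> -> v0 v1 w01; rewrite /even_closed.
have p3 := one_sub_powM_gt0 2 v0 v1 w01; have p4 := one_sub_powM_gt0 3 v0 v1 w01.
have p6 := one_sub_powM_gt0 5 v0 v1 w01.
by field; repeat (apply/andP; split); rewrite gt_eqF //; nra.
Qed.

Lemma paper_form {R : realFieldType} {z v w : R} :
  z = v / (1 + v + v ^+ 2) -> 0 < v -> v < 1 -> 0 <= w <= 1 ->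
  let F := v ^+ 2 / (1 + v + v ^+ 2) * ((1 - v ^+ 2 * w) / (1 - v ^+ 4 * w)) in
  z / (1 - z) * (1 - F / (1 - z))^-1 = v * (1 - v ^+ 4 * w) / (1 - v ^+ 6 * w).
Proof.
move=> -> v0 v1 w01 F; rewrite /F.
have p4 := one_sub_powM_gt0 3 v0 v1 w01; have p6 := one_sub_powM_gt0 5 v0 v1 w01.
by field; repeat (apply/andP; split); rewrite gt_eqF //; nra.
Qed.

Lemma height1_closed {R : realFieldType} {z v : R} :
  z = v / (1 + v + v ^+ 2) -> 0 < v -> z / (1 - z) = v / (1 + v ^+ 2).
Proof.
move=> -> v0.
by field; repeat (apply/andP; split); rewrite gt_eqF //; nra.
Qed.

Lemma z_of_v {R : realFieldType} {z v : R} :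
  0 < v -> z * (1 + v + v ^+ 2) = v -> z = v / (1 + v + v ^+ 2).
Proof. by move=> v0 hz; rewrite -{1}hz mulfK // gt_eqF // expr2; nra. Qed.

Lemma deep_gf_even_closed {R : realFieldType} {z v : R} (j : nat) :
  z = v / (1 + v + v ^+ 2) -> 0 < v -> v < 1 ->
  deep_gf z false (2 * j) = even_closed v (v ^+ (2 * j)).
Proof.
move=> zE v0 v1; elim: j => [|j IH].
  by rewrite muln0 /= expr0 /even_closed !mulr1 zE; field;
    repeat (apply/andP; split); rewrite gt_eqF //; nra.
have w01 : 0 <= v ^+ (2 * j) <= 1 by rewrite exprn_ge0 ?exprn_ile1 ?ltW.
by rewrite mulnS /= IH (even_closed_step zE v0 v1 w01) exprD.
Qed.

Lemma motzkin_param {R : rcfType} {z : R} : 0 < z -> z < 3^-1 ->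
  let v := z * ((1 - z - Num.sqrt (1 - 2 * z - 3 * z ^+ 2)) / (2 * z ^+ 2)) in
  [/\ 0 < v, v < 1 & z * (1 + v + v ^+ 2) = v].
Proof.
move=> z_gt0 z_lt; set q := Num.sqrt _ => v.
have z3 : 3 * z < 1 by move: z_lt; rewrite -(ltr_pM2l (x := 3)) // mulfV ?pnatr_eq0.
have disc0 : 0 <= 1 - 2 * z - 3 * z ^+ 2 by nra.
have q2 : q ^+ 2 = 1 - 2 * z - 3 * z ^+ 2 by rewrite sqr_sqrtr.
have q0 : 0 <= q by rewrite sqrtr_ge0.
have hv : v * (2 * z) = 1 - z - q by rewrite /v; field; rewrite gt_eqF.
have q_lt : q < 1 - z by nra.
have q_gt : 1 - 3 * z < q by nra.
split; [nra | nra |].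
apply: (mulfI (x := 4 * z)); first by rewrite gt_eqF //; lra.
apply/eqP; rewrite -subr_eq0; apply/eqP.
have -> : 4 * z * (z * (1 + v + v ^+ 2)) - 4 * z * v =
    4 * z ^+ 2 + 2 * z * (v * (2 * z)) + (v * (2 * z)) ^+ 2 - 2 * (v * (2 * z)) by ring.
by rewrite hv; nra.
Qed.

Theorem mainTheorem3 (R : realType) (h : nat) (z : R)
    (hz0 : 0 < z) (hz1 : z < 3^-1) :
  let M := (1 - z - Num.sqrt (1 - 2 * z - 3 * z ^+ 2)) / (2 * z ^+ 2) in
  let v := z * M in
  let H := if h == 0%N then 1%N else (2 * h)%N in
  let GF := \esum_(t in [set t : ptree | retakh t && (height t <= H)%N])
              ((z ^+ nnodes t)%:E) in
  if h == 0%N then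
    GF = (z / (1 - z))%:E /\ GF = (v / (1 + v ^+ 2))%:E
  else
    let F := v ^+ 2 / (1 + v + v ^+ 2) *
             ((1 - v ^+ (2 * h)) / (1 - v ^+ (2 * h + 2))) in
    GF = (z / (1 - z) * (1 - F / (1 - z))^-1)%:E /\
    GF = (v * (1 - v ^+ (2 * h + 2)) / (1 - v ^+ (2 * h + 4)))%:E.
Proof.
move=> M v H GF.
have [v_gt0 v_lt1 hz] : [/\ 0 < v, v < 1 & z * (1 + v + v ^+ 2) = v].
  exact: motzkin_param.
have zE := z_of_v v_gt0 hz.
have -> : GF = \esum_(t in retakh_trees 0 H) (tree_weight z t)%:E by [].
case: h => [|j] in H GF *.
  have z_lt1 : z < 1 by apply: lt_trans hz1 _; rewrite invf_lt1 // ltr1n.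
  by rewrite esum_retakh_height1 ?(ltW hz0) // (height1_closed zE v_gt0).
rewrite /H /= mulnS (esum_retakh_from_root _ hz0 v_gt0 v_lt1 hz).
rewrite (deep_gf_even_closed _ zE v_gt0 v_lt1).
set w := v ^+ (2 * j); have w01 : 0 <= w <= 1 by rewrite exprn_ge0 ?exprn_ile1 ?ltW.
have vE k : v ^+ (2 + 2 * j + k) = v ^+ (k + 2) * w by rewrite addnC addnA exprD.
rewrite (root_closed zE v_gt0 v_lt1 w01) !vE exprD.
by split; rewrite // (paper_form zE v_gt0 v_lt1 w01).
Qed.
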